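(* Let $(X,\le)$ be a poset and $E$ an equivalence relation on $X$ with ${\le}\subseteq E$. Let $\alpha:X\to X$ be an order automorphism of $(X,\le)$ with $\alpha\subseteq E$ and $\beta:X\to X$ a dual order automorphism of $(X,\le)$ with $\beta\subseteq E$. Then: (i) if $R,S\in\mathsf{Up}(\mathbf E)$ then $R\circ S\in\mathsf{Up}(\mathbf E)$; (ii) if $R,S\in\mathsf{Down}(\mathbf E)$ then $R\circ S\in\mathsf{Down}(\mathbf E)$; (iii) $R\in\mathsf{Up}(\mathbf E)$ iff $R^c\in\mathsf{Down}(\mathbf E)$; (iv) $R\in\mathsf{Up}(\mathbf E)$ iff $R^\smile\in\mathsf{Down}(\mathbf E)$; (v) if $R\in\mathsf{Up}(\mathbf E)$ then $\alpha\circ R\in\mathsf{Up}(\mathbf E)$ and $R\circ\alpha\in\mathsf{Up}(\mathbf E)$; (vi) if $R\in\mathsf{Down}(\mathbf E)$ then $\beta\circ R\circ\beta\in\mathsf{Up}(\mathbf E)$.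
   Context: For binary relations: converse $R^\smile=\{(x,y)\mid(y,x)\in R\}$; composition $R\circ S=\{(x,y)\mid\exists z\,((x,z)\in R,(z,y)\in S)\}$. Functions $X\to X$ are identified with their graphs $\{(x,\gamma(x))\}$. For a poset $(X,\le)$ and an equivalence relation $E\supseteq{\le}$ on $X$, $E$ is partially ordered by $(u,v)\preceq(x,y)$ iff $x\le u$ and $v\le y$; $\mathbf E=(E,\preceq)$, and $\mathsf{Up}(\mathbf E)$, $\mathsf{Down}(\mathbf E)$ are its sets of up-sets and down-sets. For $R\subseteq E$, $R^c=E\setminus R$. An order automorphism is a bijection $\alpha$ with $x\le y\iff\alpha(x)\le\alpha(y)$; a dual order automorphism is a bijection $\beta$ with $x\le y\iff\beta(y)\le\beta(x)$. *)

Set Implicit Arguments.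

Definition relation (X : Type) := X -> X -> Prop.

Section Rels.
Variable X : Type.

Definition subrel (R S : relation X) : Prop := forall x y, R x y -> S x y.

Definition conv (R : relation X) : relation X := fun x y => R y x.

Definition comp (R S : relation X) : relation X :=
  fun x y => exists z, R x z /\ S z y.

Definition graph (f : X -> X) : relation X := fun x y => f x = y.

Definition relc (E R : relation X) : relation X := fun x y => E x y /\ ~ R x y.

Definition is_poset (le : relation X) : Prop :=
  (forall x, le x x) /\
  (forall x y, le x y -> le y x -> x = y) /\
  (forall x y z, le x y -> le y z -> le x z).

Definition is_equivalence (E : relation X) : Prop :=
  (forall x, E x x) /\
  (forall x y, E x y -> E y x) /\
  (forall x y z, E x y -> E y z -> E x z).

Definition bijective_fun (f : X -> X) : Prop :=
  (forall x y, f x = f y -> x = y) /\ (forall y, exists x, f x = y).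

Definition order_automorphism (le : relation X) (a : X -> X) : Prop :=
  bijective_fun a /\ forall x y, le x y <-> le (a x) (a y).

Definition dual_order_automorphism (le : relation X) (b : X -> X) : Prop :=
  bijective_fun b /\ forall x y, le x y <-> le (b y) (b x).

Definition preceq (le : relation X) (u v x y : X) : Prop := le x u /\ le v y.

Definition UpE (le E R : relation X) : Prop :=
  subrel R E /\
  forall u v x y, R u v -> E x y -> preceq le u v x y -> R x y.

Definition DownE (le E R : relation X) : Prop :=
  subrel R E /\
  forall u v x y, R x y -> E u v -> preceq le u v x y -> R u v.

End Rels.

(* A relation R ⊆ E is an up-set of (E, ⪯) exactly when it is closed under
   lowering its first coordinate and, separately, under raising its second:
   from (u,v) to (x,y) one can pass through (x,v), which lies in E because
   R ⊆ E and ≤ ⊆ E.  Down-sets are the up-sets for the dual order.  Each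
   claim then reduces to these one-sided closure properties, which
   composition, converse, complement and (dual) order automorphisms visibly
   preserve or exchange. *)

From Stdlib Require Import Classical.
From Stdlib Require Setoid.

Section OneSidedClosure.
Variable X : Type.
Implicit Types (le R S : relation X) (f : X -> X).

Definition left_closed le R : Prop := forall x u v, le x u -> R u v -> R x v.
Definition right_closed le R : Prop := forall u v y, R u v -> le v y -> R u y.

Lemma left_closed_comp le R S : left_closed le R -> left_closed le (comp R S).
Proof. intros HR x u v Hxu [z [Ruz Szv]]. exists z. eauto. Qed.

Lemma right_closed_comp le R S : right_closed le S -> right_closed le (comp R S).
Proof. intros HS u v y [z [Ruz Szv]] Hvy. exists z. eauto. Qed.

Lemma left_closed_graph_comp le1 le2 R f :
  (forall x y, le1 x y -> le2 (f x) (f y)) ->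
  left_closed le2 R -> left_closed le1 (comp (graph f) R).
Proof.
  intros Hf HR x u v Hxu [z [<- Rz]].
  exists (f x). split; [reflexivity | exact (HR _ _ _ (Hf _ _ Hxu) Rz)].
Qed.

Lemma right_closed_comp_graph le1 le2 R f :
  (forall y, exists x, f x = y) ->
  (forall x y, le1 (f x) (f y) -> le2 x y) ->
  right_closed le2 R -> right_closed le1 (comp R (graph f)).
Proof.
  intros Hsurj Hf HR u v y [z [Ruz <-]] Hzy.
  destruct (Hsurj y) as [z' <-].
  exists z'. split; [exact (HR _ _ _ Ruz (Hf _ _ Hzy)) | reflexivity].
Qed.

Lemma left_closed_conv le R : left_closed le R <-> right_closed (conv le) (conv R).
Proof. unfold left_closed, right_closed, conv. split; eauto. Qed.

Lemma right_closed_conv le R : right_closed le R <-> left_closed (conv le) (conv R).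
Proof. unfold left_closed, right_closed, conv. split; eauto. Qed.

Variable E : relation X.
Hypothesis E_sym : forall x y, E x y -> E y x.
Hypothesis E_trans : forall x y z, E x y -> E y z -> E x z.

Lemma subrel_comp R S : subrel R E -> subrel S E -> subrel (comp R S) E.
Proof. intros RE SE x y [z [Rxz Szy]]. eauto. Qed.

Lemma subrel_conv R : subrel R E -> subrel (conv R) E.
Proof. intros RE x y Ryx. exact (E_sym _ _ (RE _ _ Ryx)). Qed.

Lemma UpE_iff le :
  (forall x, le x x) -> subrel le E ->
  forall R, UpE le E R <-> subrel R E /\ left_closed le R /\ right_closed le R.
Proof.
  intros le_refl le_sub R. split.
  - intros [RE HR]. split; [exact RE | split].
    + intros x u v Hxu Ruv.
      exact (HR u v x v Ruv (E_trans _ _ _ (le_sub _ _ Hxu) (RE _ _ Ruv)) (conj Hxu (le_refl v))).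
    + intros u v y Ruv Hvy.
      exact (HR u v u y Ruv (E_trans _ _ _ (RE _ _ Ruv) (le_sub _ _ Hvy)) (conj (le_refl u) Hvy)).
  - intros [RE [Hl Hr]]. split; [exact RE |].
    intros u v x y Ruv _ [Hxu Hvy]. exact (Hr x v y (Hl x u v Hxu Ruv) Hvy).
Qed.

Lemma DownE_iff_UpE_conv le R : DownE le E R <-> UpE (conv le) E R.
Proof. unfold DownE, UpE, preceq, conv. split; intros [RE HR]; split; eauto. Qed.

Variable le : relation X.
Hypothesis le_refl : forall x, le x x.
Hypothesis le_sub_E : subrel le E.

Lemma DownE_iff R :
  DownE le E R <-> subrel R E /\ left_closed (conv le) R /\ right_closed (conv le) R.
Proof.
  rewrite DownE_iff_UpE_conv.
  apply UpE_iff; [exact le_refl | exact (subrel_conv _ le_sub_E)].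
Qed.

Lemma left_closed_relc R :
  subrel R E -> left_closed le R <-> left_closed (conv le) (relc E R).
Proof.
  intros RE. split.
  - intros Hl x u v Hux [Euv nRuv]. split.
    + exact (E_trans _ _ _ (E_sym _ _ (le_sub_E _ _ Hux)) Euv).
    + intros Rxv. exact (nRuv (Hl u x v Hux Rxv)).
  - intros Hc x u v Hxu Ruv. apply NNPP. intros nRxv.
    destruct (Hc u x v Hxu (conj (E_trans _ _ _ (le_sub_E _ _ Hxu) (RE _ _ Ruv)) nRxv))
      as [_ nRuv].
    exact (nRuv Ruv).
Qed.

Lemma right_closed_relc R :
  subrel R E -> right_closed le R <-> right_closed (conv le) (relc E R).
Proof.
  intros RE. split.
  - intros Hr u v y [Euv nRuv] Hyv. split.
    + exact (E_trans _ _ _ Euv (E_sym _ _ (le_sub_E _ _ Hyv))).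
    + intros Ruy. exact (nRuv (Hr u y v Ruy Hyv)).
  - intros Hc u v y Ruv Hvy. apply NNPP. intros nRuy.
    destruct (Hc u y v (conj (E_trans _ _ _ (RE _ _ Ruv) (le_sub_E _ _ Hvy)) nRuy) Hvy)
      as [_ nRuv].
    exact (nRuv Ruv).
Qed.

Lemma UpE_comp R S : UpE le E R -> UpE le E S -> UpE le E (comp R S).
Proof.
  rewrite !UpE_iff by assumption.
  intros [RE [Rl _]] [SE [_ Sr]].
  split; [| split]; auto using subrel_comp, left_closed_comp, right_closed_comp.
Qed.

Lemma DownE_comp R S : DownE le E R -> DownE le E S -> DownE le E (comp R S).
Proof.
  rewrite !DownE_iff.
  intros [RE [Rl _]] [SE [_ Sr]].
  split; [| split]; auto using subrel_comp, left_closed_comp, right_closed_comp.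
Qed.

Lemma UpE_iff_DownE_relc R : subrel R E -> UpE le E R <-> DownE le E (relc E R).
Proof.
  intros RE.
  rewrite UpE_iff, DownE_iff, <- left_closed_relc, <- right_closed_relc by assumption.
  split; intros [_ H]; split; try exact H.
  - intros x y [Exy _]. exact Exy.
  - exact RE.
Qed.

Lemma UpE_iff_DownE_conv R : subrel R E -> UpE le E R <-> DownE le E (conv R).
Proof.
  intros RE.
  rewrite UpE_iff, DownE_iff, <- left_closed_conv, <- right_closed_conv by assumption.
  split; intros [_ [Hl Hr]]; split; auto using subrel_conv.
Qed.

Lemma UpE_graph_comp a R :
  (forall x y, le x y -> le (a x) (a y)) -> subrel (graph a) E ->
  UpE le E R -> UpE le E (comp (graph a) R).
Proof.
  intros Ha aE. rewrite !UpE_iff by assumption.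
  intros [RE [Rl Rr]].
  split; [| split]; eauto using subrel_comp, left_closed_graph_comp, right_closed_comp.
Qed.

Lemma UpE_comp_graph a R :
  (forall y, exists x, a x = y) -> (forall x y, le (a x) (a y) -> le x y) ->
  subrel (graph a) E ->
  UpE le E R -> UpE le E (comp R (graph a)).
Proof.
  intros Hsurj Ha aE. rewrite !UpE_iff by assumption.
  intros [RE [Rl Rr]].
  split; [| split]; eauto using subrel_comp, left_closed_comp, right_closed_comp_graph.
Qed.

Lemma UpE_conj_graph_of_DownE b R :
  (forall y, exists x, b x = y) -> (forall x y, le x y <-> le (b y) (b x)) ->
  subrel (graph b) E ->
  DownE le E R -> UpE le E (comp (comp (graph b) R) (graph b)).
Proof.
  intros Hsurj Hb bE. rewrite DownE_iff, UpE_iff by assumption.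
  intros [RE [Rl Rr]]. split; [| split].
  - auto using subrel_comp.
  - apply left_closed_comp.
    apply left_closed_graph_comp with (le2 := conv le); [| exact Rl].
    intros x y. apply Hb.
  - apply right_closed_comp_graph with (le2 := conv le); [exact Hsurj | |].
    + intros x y. apply Hb.
    + apply right_closed_comp. exact Rr.
Qed.

End OneSidedClosure.

Theorem lemma3p5 (X : Type) (le E : relation X) (alpha beta : X -> X)
  (Hle : is_poset le) (HE : is_equivalence E) (HleE : subrel le E)
  (Ha : order_automorphism le alpha) (HaE : subrel (graph alpha) E)
  (Hb : dual_order_automorphism le beta) (HbE : subrel (graph beta) E) :
  (forall R S : relation X, UpE le E R -> UpE le E S -> UpE le E (comp R S)) /\
  (forall R S : relation X, DownE le E R -> DownE le E S -> DownE le E (comp R S)) /\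
  (forall R : relation X, subrel R E -> (UpE le E R <-> DownE le E (relc E R))) /\
  (forall R : relation X, subrel R E -> (UpE le E R <-> DownE le E (conv R))) /\
  (forall R : relation X, UpE le E R ->
     UpE le E (comp (graph alpha) R) /\ UpE le E (comp R (graph alpha))) /\
  (forall R : relation X, DownE le E R ->
     UpE le E (comp (comp (graph beta) R) (graph beta))).
Proof.
  destruct Hle as [le_refl _], HE as [_ [E_sym E_trans]].
  destruct Ha as [[_ a_surj] a_mono], Hb as [[_ b_surj] b_anti].
  split; [| split; [| split; [| split; [| split]]]]; intros R.
  - intros S. apply UpE_comp; assumption.
  - intros S. apply DownE_comp; assumption.
  - apply UpE_iff_DownE_relc; assumption.
  - apply UpE_iff_DownE_conv; assumption.
  - intros HR. split.
    + apply UpE_graph_comp; try assumption. apply a_mono.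
    + apply UpE_comp_graph; try assumption. apply a_mono.
  - apply UpE_conj_graph_of_DownE; assumption.
Qed.
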